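(* Let $n,m,p,N\in\mathbb{N}_+$, $B\in\mathbb{R}^{n\times m}$, $C\in\mathbb{R}^{p\times n}$ of full column rank, $x_0\in\mathbb{R}^n$, $r_1,\dots,r_N\in\mathbb{R}^p$, $r_0:=Cx_0$, $\lambda_1,\lambda_2,\lambda_3\ge0$, functions $f_1,f_2,f_3$ and a set $\mathcal{S}\subseteq\mathbb{R}^{n\times n}\times\mathbb{R}^{m\times N}\times\mathbb{R}_+$. Consider problem (AMOPUL): minimize $\lambda_1f_1(A)+\lambda_2f_2(U)+\lambda_3f_3(\omega)$ over $A\in\mathbb{R}^{n\times n}$, $U=(u_0,\dots,u_{N-1})\in\mathbb{R}^{m\times N}$, $\omega\in\mathbb{R}_+$ subject to $\sum_{t=1}^N\|CAC^{\dagger}r_{t-1}+CBu_{t-1}-r_t\|_2\le\omega$ and $(A,U,\omega)\in\mathcal{S}$. Suppose there exist $\beta>0$ and $\omega^{\rm u}>0$ such that $\|CA^{\rm a}C^{\dagger}\|_2\le\beta$ and $\omega^{\rm a}\le\omega^{\rm u}$ for every feasible solution $(A^{\rm a},U^{\rm a},\omega^{\rm a})$ of (AMOPUL). Then for each optimal solution $(A^{\rm a*},U^{\rm a*},\omega^{\rm a*})$ of (AMOPUL), with $U^{\rm a*}=(u^{\rm a*}_0,\dots,u^{\rm a*}_{N-1})$, defining $x_t=A^{\rm a*}x_{t-1}+Bu^{\rm a*}_{t-1}$ and $y_t=Cx_t$ for $t=1,\dots,N$, we have $$\sum_{t=1}^N\|y_t-r_t\|_2\le\Big(\sum_{i=0}^{N-1}\beta^i\Big)\omega^{\rm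 u}.$$
   Context: $C^{\dagger}$ is the Moore–Penrose inverse of $C$; $\|\cdot\|_2$ denotes the Euclidean norm for vectors and the spectral norm (largest singular value) for matrices. In the paper $f_1,f_2,f_3$ and $\mathcal{S}$ are assumed SD representable (convex and expressible by linear matrix inequalities), though this is not used in the claim. *)

From HB Require Import structures.
From mathcomp Require Import all_boot all_order all_algebra.
From mathcomp Require Import classical_sets reals.
Set Implicit Arguments. Unset Strict Implicit. Unset Printing Implicit Defensive.
Import Order.TTheory GRing.Theory Num.Theory.
Local Open Scope ring_scope.
Local Open Scope classical_set_scope.

Section Defs.
Variable R : realType.

Definition norm2 (k : nat) (v : 'cV[R]_k) : R :=
  Num.sqrt (\sum_(i < k) v i 0 ^+ 2).

Definition specnorm (a b : nat) (M : 'M[R]_(a, b)) : R :=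
  sup [set y | exists x : 'cV[R]_b, norm2 x <= 1 /\ y = norm2 (M *m x)].

Definition is_pinv (a b : nat) (C : 'M[R]_(a, b)) (X : 'M[R]_(b, a)) : Prop :=
  [/\ C *m X *m C = C, X *m C *m X = X,
      (C *m X)^T = C *m X & (X *m C)^T = X *m C].

(* column u_t of U (0 outside range) *)
Definition ucol (m N : nat) (U : 'M[R]_(m, N)) (t : nat) : 'cV[R]_m :=
  if @insub nat (fun k => k < N)%N _ t is Some i then col i U else 0.

Fixpoint traj (n m N : nat) (A : 'M[R]_n) (B : 'M[R]_(n, m))
  (U : 'M[R]_(m, N)) (x0 : 'cV[R]_n) (t : nat) : 'cV[R]_n :=
  match t with
  | 0%N => x0
  | t'.+1 => A *m traj A B U x0 t' + B *m ucol U t'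
  end.

Definition amopul_feasible (n m p N : nat) (B : 'M[R]_(n, m)) (C : 'M[R]_(p, n))
  (Cd : 'M[R]_(n, p)) (r : nat -> 'cV[R]_p)
  (S : 'M[R]_n -> 'M[R]_(m, N) -> R -> Prop)
  (A : 'M[R]_n) (U : 'M[R]_(m, N)) (w : R) : Prop :=
  [/\ 0 <= w,
      \sum_(t < N) norm2 (C *m A *m Cd *m r t + C *m B *m col t U - r t.+1) <= w
    & S A U w].

Definition amopul_optimal (n m p N : nat) (B : 'M[R]_(n, m)) (C : 'M[R]_(p, n))
  (Cd : 'M[R]_(n, p)) (r : nat -> 'cV[R]_p)
  (S : 'M[R]_n -> 'M[R]_(m, N) -> R -> Prop)
  (l1 l2 l3 : R) (f1 : 'M[R]_n -> R) (f2 : 'M[R]_(m, N) -> R) (f3 : R -> R)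
  (A : 'M[R]_n) (U : 'M[R]_(m, N)) (w : R) : Prop :=
  amopul_feasible B C Cd r S A U w /\
  forall A' U' w', amopul_feasible B C Cd r S A' U' w' ->
    l1 * f1 A + l2 * f2 U + l3 * f3 w <= l1 * f1 A' + l2 * f2 U' + l3 * f3 w'.

End Defs.

(** The output error e_t := C x_t - r_t obeys e_{t+1} = (C A C^+) e_t + d_t, where
   d_t := C A C^+ r_t + C B u_t - r_{t+1} is exactly the t-th residual of the
   constraint of (AMOPUL); this uses C^+ C = I, which holds since C has full column
   rank. Hence |e_{t+1}| <= beta |e_t| + |d_t| with e_0 = 0, and summing the
   unrolled recursion gives sum_t |e_{t+1}| <= (sum_{i<N} beta^i) sum_t |d_t|,
   while sum_t |d_t| <= omega <= omega^u for every feasible point. *)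

From HB Require Import structures.
From mathcomp Require Import all_boot all_order all_algebra.
From mathcomp Require Import classical_sets reals.
From mathcomp Require Import ring lra.
Set Implicit Arguments. Unset Strict Implicit. Unset Printing Implicit Defensive.
Import Order.TTheory GRing.Theory Num.Theory.
Local Open Scope ring_scope.

Section EuclideanNorm.
Variable R : realType.

Lemma norm2_ge0 k (v : 'cV[R]_k) : 0 <= norm2 v.
Proof. exact: sqrtr_ge0. Qed.

Lemma norm2_sqr k (v : 'cV[R]_k) : norm2 v ^+ 2 = \sum_(i < k) v i 0 ^+ 2.
Proof. by rewrite sqr_sqrtr // sumr_ge0 // => i _; rewrite sqr_ge0. Qed.

Lemma norm2_eq0 k (v : 'cV[R]_k) : norm2 v = 0 -> v = 0.
Proof.
move=> v0; apply/matrixP => i j; rewrite ord1 mxE; apply/eqP; rewrite -sqrf_eq0.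
have /psumr_eq0P sq0 : \sum_(i < k) v i 0 ^+ 2 = 0 by rewrite -norm2_sqr v0 expr0n.
by apply/eqP/sq0 => // l _; rewrite sqr_ge0.
Qed.

Lemma norm2_0 k : norm2 (0 : 'cV[R]_k) = 0.
Proof. by rewrite /norm2 big1 ?sqrtr0 // => i _; rewrite mxE expr0n. Qed.

Lemma norm2Z k c (v : 'cV[R]_k) : norm2 (c *: v) = `|c| * norm2 v.
Proof.
rewrite /norm2 -sqrtr_sqr -sqrtrM ?sqr_ge0 // mulr_sumr.
by congr Num.sqrt; apply: eq_bigr => i _; rewrite mxE exprMn.
Qed.

Lemma abs_coord_le_norm2 k (v : 'cV[R]_k) i : `|v i 0| <= norm2 v.
Proof.
rewrite -sqrtr_sqr ler_sqrt ?sumr_ge0 // => [|j _]; last exact: sqr_ge0.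
by rewrite (bigD1 i) //= lerDl sumr_ge0 // => j _; rewrite sqr_ge0.
Qed.

Lemma cauchy_schwarz k (u v : 'cV[R]_k) :
  \sum_(i < k) u i 0 * v i 0 <= norm2 u * norm2 v.
Proof.
have [/norm2_eq0 -> | a0] := eqVneq (norm2 u) 0.
  by rewrite norm2_0 mul0r big1 // => i _; rewrite mxE mul0r.
have [/norm2_eq0 -> | b0] := eqVneq (norm2 v) 0.
  by rewrite norm2_0 mulr0 big1 // => i _; rewrite mxE mulr0.
set a := norm2 u in a0 *; set b := norm2 v in b0 *.
have ab_gt0 : 0 < 2 * (a * b).
  by rewrite !mulr_gt0 // lt_def ?a0 ?b0 norm2_ge0.
(* expand  0 <= sum_i (b u_i - a v_i)^2 = 2ab (ab - <u, v>) *)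
have : 0 <= \sum_(i < k) (b * u i 0 - a * v i 0) ^+ 2.
  by apply: sumr_ge0 => i _; rewrite sqr_ge0.
have -> : \sum_(i < k) (b * u i 0 - a * v i 0) ^+ 2 =
    b ^+ 2 * \sum_(i < k) u i 0 ^+ 2 + a ^+ 2 * \sum_(i < k) v i 0 ^+ 2
      - 2 * (a * b) * \sum_(i < k) u i 0 * v i 0.
  by rewrite !mulr_sumr -!big_split -sumrB; apply: eq_bigr => i _ /=; ring.
rewrite -!norm2_sqr -/a -/b subr_ge0 => le_sq; rewrite -(ler_pM2l ab_gt0).
by have -> : 2 * (a * b) * (a * b) = b ^+ 2 * a ^+ 2 + a ^+ 2 * b ^+ 2 by ring.
Qed.

Lemma norm2D_le k (u v : 'cV[R]_k) : norm2 (u + v) <= norm2 u + norm2 v.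
Proof.
rewrite -(ler_sqr (norm2_ge0 _)) ?nnegrE ?addr_ge0 ?norm2_ge0 //.
have -> : norm2 (u + v) ^+ 2 =
    norm2 u ^+ 2 + norm2 v ^+ 2 + 2 * \sum_(i < k) u i 0 * v i 0.
  rewrite !norm2_sqr mulr_sumr -!big_split /=.
  by apply: eq_bigr => i _; rewrite mxE; ring.
have := cauchy_schwarz u v; nra.
Qed.

Lemma norm2_sum_le (I : Type) (s : seq I) (P : pred I) k (F : I -> 'cV[R]_k) :
  norm2 (\sum_(i <- s | P i) F i) <= \sum_(i <- s | P i) norm2 (F i).
Proof.
apply: (big_ind2 (fun v a => norm2 v <= a)).
- by rewrite norm2_0.
- by move=> v1 a1 v2 a2 h1 h2; apply: le_trans (norm2D_le _ _) (lerD h1 h2).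
- by [].
Qed.

End EuclideanNorm.

Section SpectralNorm.
Variables (R : realType) (a b : nat).

Lemma norm2_mulmx_unit_le (M : 'M[R]_(a, b)) (x : 'cV[R]_b) :
  norm2 x <= 1 -> norm2 (M *m x) <= \sum_(j < b) norm2 (col j M).
Proof.
move=> x_le1.
have -> : M *m x = \sum_(j < b) x j 0 *: col j M.
  by apply/matrixP => i l; rewrite mxE summxE; apply: eq_bigr => j _;
    rewrite !mxE ord1 mulrC.
apply: le_trans (norm2_sum_le _ _ _) _; apply: ler_sum => j _.
rewrite norm2Z -[leRHS]mul1r ler_wpM2r ?norm2_ge0 //.
exact: le_trans (abs_coord_le_norm2 _ _) x_le1.
Qed.

Lemma norm2_mulmx_le (M : 'M[R]_(a, b)) (v : 'cV[R]_b) :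
  norm2 (M *m v) <= specnorm M * norm2 v.
Proof.
have [/norm2_eq0 -> | v0] := eqVneq (norm2 v) 0.
  by rewrite mulmx0 !norm2_0 mulr0.
have v_gt0 : 0 < norm2 v by rewrite lt_def v0 norm2_ge0.
have unit_v : norm2 ((norm2 v)^-1 *: v) = 1.
  by rewrite norm2Z gtr0_norm ?invr_gt0 // mulVf.
have : norm2 (M *m ((norm2 v)^-1 *: v)) <= specnorm M.
  apply: ub_le_sup; last by exists ((norm2 v)^-1 *: v); rewrite unit_v.
  exists (\sum_(j < b) norm2 (col j M)) => _ [x [x_le1 ->]].
  exact: norm2_mulmx_unit_le.
by rewrite -scalemxAr norm2Z gtr0_norm ?invr_gt0 // mulrC ler_pdivrMr.
Qed.

End SpectralNorm.

Section LinearRecursiveBound.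
Variables (R : realType) (beta : R).
Hypothesis beta_ge0 : 0 <= beta.

Let G j := \sum_(i < j) beta ^+ i.

Let G_ge0 j : 0 <= G j.
Proof. by apply: sumr_ge0 => i _; rewrite exprn_ge0. Qed.

Let GS j : G j.+1 = 1 + beta * G j.
Proof.
by rewrite /G big_ord_recl expr0 mulr_sumr; congr (_ + _);
  apply: eq_bigr => i _; rewrite exprS.
Qed.

Let G_le j l : (j <= l)%N -> G j <= G l.
Proof.
move=> /subnKC <-; rewrite /G big_split_ord /= lerDl.
by apply: sumr_ge0 => i _; rewrite exprn_ge0.
Qed.

Lemma sum_linear_recursion_le (E d : nat -> R) N :
  E 0%N = 0 -> (forall t, 0 <= d t) -> (forall t, E t.+1 <= beta * E t + d t) ->
  \sum_(t < N) E t.+1 <= (\sum_(i < N) beta ^+ i) * \sum_(t < N) d t.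
Proof.
move=> E0 d_ge0 E_rec.
(* potential  sum_{t<k} E_{t+1} + beta G(N-k) E_k  increases by at most G(N) d_k *)
suff potential k : (k <= N)%N ->
    \sum_(t < k) E t.+1 + beta * G (N - k) * E k <= G N * \sum_(t < k) d t.
  by have := potential N (leqnn N); rewrite subnn /G big_ord0 mulr0 mul0r addr0.
elim: k => [_ | k IH lt_kN]; first by rewrite !big_ord0 E0 !mulr0 addr0.
have {IH} := IH (ltnW lt_kN); rewrite !big_ord_recr /= -(subnSK lt_kN) GS.
have step : (1 + beta * G (N - k.+1)) * E k.+1
    <= (1 + beta * G (N - k.+1)) * (beta * E k + d k).
  by rewrite ler_wpM2l ?addr_ge0 ?mulr_ge0.
have GSk_le : 1 + beta * G (N - k.+1) <= G N.
  by rewrite -GS G_le // subnSK // leq_subr.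
have := ler_wpM2r (d_ge0 k) GSk_le; nra.
Qed.

End LinearRecursiveBound.

Section TrackingError.
Variables (R : realType) (n m p N : nat) (C : 'M[R]_(p, n)) (Cd : 'M[R]_(n, p)).

Lemma pinv_mulmx_full_col : \rank C = n -> C *m Cd *m C = C -> Cd *m C = 1%:M.
Proof.
move=> rankC CCdC; have /row_fullP [D DC] : row_full C by rewrite /row_full rankC.
by rewrite -[Cd *m C]mul1mx -DC -mulmxA (mulmxA C) CCdC DC.
Qed.

Lemma ucol_ord (U : 'M[R]_(m, N)) (t : 'I_N) : ucol U t = col t U.
Proof. by rewrite /ucol; case: insubP => [i _ /val_inj -> | ]; rewrite ?ltn_ord. Qed.

Lemma tracking_error_step (CdC : Cd *m C = 1%:M) (A : 'M[R]_n) (B : 'M[R]_(n, m))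
    (U : 'M[R]_(m, N)) (x0 : 'cV[R]_n) (r : nat -> 'cV[R]_p) t :
  C *m traj A B U x0 t.+1 - r t.+1 =
    C *m A *m Cd *m (C *m traj A B U x0 t - r t) +
    (C *m A *m Cd *m r t + C *m B *m ucol U t - r t.+1).
Proof.
rewrite /= mulmxDr mulmxBr !mulmxA -(mulmxA (C *m A) Cd C) CdC mulmx1.
by rewrite !addrA subrK.
Qed.

End TrackingError.

Theorem theorem2 (R : realType) (n m p N : nat)
  (hn : (0 < n)%N) (hm : (0 < m)%N) (hp : (0 < p)%N) (hN : (0 < N)%N)
  (B : 'M[R]_(n, m)) (C : 'M[R]_(p, n)) (hC : \rank C = n)
  (Cd : 'M[R]_(n, p)) (hCd : is_pinv C Cd)
  (x0 : 'cV[R]_n) (r : nat -> 'cV[R]_p) (hr0 : r 0%N = C *m x0)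
  (l1 l2 l3 : R) (hl1 : 0 <= l1) (hl2 : 0 <= l2) (hl3 : 0 <= l3)
  (f1 : 'M[R]_n -> R) (f2 : 'M[R]_(m, N) -> R) (f3 : R -> R)
  (S : 'M[R]_n -> 'M[R]_(m, N) -> R -> Prop)
  (beta wu : R) (hbeta : 0 < beta) (hwu : 0 < wu)
  (hbound : forall A U w, amopul_feasible B C Cd r S A U w ->
       specnorm (C *m A *m Cd) <= beta /\ w <= wu)
  (As : 'M[R]_n) (Us : 'M[R]_(m, N)) (ws : R)
  (hopt : amopul_optimal B C Cd r S l1 l2 l3 f1 f2 f3 As Us ws) :
  \sum_(t < N) norm2 (C *m traj As B Us x0 t.+1 - r t.+1)
    <= (\sum_(i < N) beta ^+ i) * wu.
Proof.
have [feas _] := hopt; have [M_le ws_le] := hbound _ _ _ feas.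
have [_ residual_le _] := feas.
have [CCdC _ _ _] := hCd; have CdC := pinv_mulmx_full_col hC CCdC.
pose d t := norm2 (C *m As *m Cd *m r t + C *m B *m ucol Us t - r t.+1).
pose e t := norm2 (C *m traj As B Us x0 t - r t).
apply: le_trans (sum_linear_recursion_le (ltW hbeta) (E := e) (d := d) N _ _ _) _.
- by rewrite /e /= hr0 subrr norm2_0.
- by move=> t; apply: norm2_ge0.
- move=> t; rewrite /e (tracking_error_step CdC); apply: le_trans (norm2D_le _ _) _.
  by rewrite lerD2r (le_trans (norm2_mulmx_le _ _)) // ler_wpM2r ?norm2_ge0.
- have geom_ge0 : 0 <= \sum_(i < N) beta ^+ i.
    by apply: sumr_ge0 => i _; rewrite exprn_ge0 // ltW.
  rewrite ler_wpM2l //.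
  under eq_bigr => t _ do rewrite /d ucol_ord.
  exact: le_trans residual_le ws_le.
Qed.
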